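(* Let $N_1=(S_1,T_1,F_1,M_{0,1},\ell)$ and $N_2=(S_2,T_2,F_2,M_{0,2},\ell_2)$ be two Petri nets, $N_2$ being plain; let $\mathfrak M_1,\mathfrak M_1'$ be ST-markings of $N_1$ and $\mathfrak M_2,\mathfrak M_2'$ ST-markings of $N_2$, and let $\eta,\eta'\in\mathrm{Act}^\pm\cup\{\tau\}$. If $\ell(\mathfrak M_2)=\ell(\mathfrak M_1)$, $\mathfrak M_1\xrightarrow{\eta}\mathfrak M_1'$ and $\mathfrak M_2\xrightarrow{(\eta')}\mathfrak M_2'$ with $\overline{\eta'}=\overline{\eta}$, then there is an ST-marking $\mathfrak M_2''$ of $N_2$ with $\mathfrak M_2\xrightarrow{(\eta)}\mathfrak M_2''$, $\ell(\mathfrak M_2'')=\ell(\mathfrak M_1')$ and $\overline{\mathfrak M_2''}=\overline{\mathfrak M_2'}$.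
   Context: Fix visible actions $\mathrm{Act}$ and $\tau\notin\mathrm{Act}$. A Petri net $(S,T,F,M_0,\ell)$ has disjoint $S,T$, $F:(S\times T)\cup(T\times S)\to\mathbb N$, $M_0\in\mathbb N^S$, $\ell:T\to\mathrm{Act}\cup\{\tau\}$; ${}^\bullet t(s)=F(s,t)$, $t^\bullet(s)=F(t,s)$; $M[t\rangle M'$ iff ${}^\bullet t\le M$ and $M'=M-{}^\bullet t+t^\bullet$. Plain: $\ell$ injective and never $\tau$. $\mathrm{Act}^\pm=\{a^+,a^{-n}\mid a\in\mathrm{Act},n>0\}$. An ST-marking is $(M,U)\in\mathbb N^S\times T^*$. Transitions: $(M,U)\xrightarrow{a^+}(M-{}^\bullet t,Ut)$ iff $\ell(t)=a$ and $M[t\rangle$; $(M,U)\xrightarrow{a^{-n}}(M+t^\bullet,U^{-n})$ iff the $n$-th element $t$ of $U$ has $\ell(t)=a$, $U^{-n}$ being $U$ with its $n$-th element removed; $(M,U)\xrightarrow{\tau}(M',U)$ iff $M[t\rangle M'$ with $\ell(t)=\tau$. $\mathfrak M\xrightarrow{(\eta)}\mathfrak M'$ means $\mathfrak M\xrightarrow{\eta}\mathfrak M'$ or ($\eta=\tau$ and $\mathfrak M=\mathfrak M'$). For $\mathfrak M=(M,t_1\cdots t_k)$, $\ell(\mathfrak M)=\ell(t_1)\cdots\ell(t_k)$ (a word) and $\overline{\mathfrak M}=(M,\overline U)$ where $\overline U(t)$ is the number of occurrences of $t$ in $U=t_1\cdots t_k$. Also $\overline{a^+}=a^+$, $\overline{a^{-n}}=a^-$,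 $\overline\tau=\tau$. *)

From mathcomp Require Import all_boot.
Set Implicit Arguments. Unset Strict Implicit. Unset Printing Implicit Defensive.

(* Labels: [Some a] for a visible action a, [None] for tau. *)
Record petri_net (Act : Type) (S : Type) (T : eqType) := PetriNet {
  F_st : S -> T -> nat;
  F_ts : T -> S -> nat;
  M0 : S -> nat;
  lab : T -> option Act
}.

Definition plain (Act S : Type) (T : eqType) (N : petri_net Act S T) : Prop :=
  injective (lab N) /\ forall t, lab N t <> None.

(* Elements of Act^{+-} \cup {tau}; AMinus a n stands for a^{-n} (n > 0 is
   enforced by the transition relation). *)
Inductive pmact (Act : Type) :=
| APlus of Act
| AMinus of Act & nat
| ATau.
Arguments ATau {Act}.

Inductive bact (Act : Type) :=
| BPlus of Act
| BMinus of Act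
| BTau.
Arguments BTau {Act}.

Definition bar_act (Act : Type) (e : pmact Act) : bact Act :=
  match e with
  | APlus a => BPlus a
  | AMinus a _ => BMinus a
  | ATau => BTau
  end.

Definition st_marking (S : Type) (T : eqType) := ((S -> nat) * seq T)%type.

Section ST.
Variables (Act S : Type) (T : eqType) (N : petri_net Act S T).

Definition enabled (M : S -> nat) (t : T) : Prop := forall s, F_st N s t <= M s.

(* U^{-n}: U with its n-th element (1-based) removed *)
Definition remove_nth (U : seq T) (n : nat) : seq T := take n.-1 U ++ drop n U.

Definition st_step (m : st_marking S T) (e : pmact Act) (m' : st_marking S T) : Prop :=
  match e with
  | APlus a => exists t, lab N t = Some a /\ enabled m.1 t /\
       m' = ((fun s => m.1 s - F_st N s t), rcons m.2 t)
  | AMinus a n => 0 < n /\ exists t, onth m.2 n.-1 = Some t /\ lab N t = Some a /\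
       m' = ((fun s => m.1 s + F_ts N t s), remove_nth m.2 n)
  | ATau => exists t, lab N t = None /\ enabled m.1 t /\
       m' = ((fun s => m.1 s - F_st N s t + F_ts N t s), m.2)
  end.

Definition st_step_opt (m : st_marking S T) (e : pmact Act) (m' : st_marking S T) : Prop :=
  st_step m e m' \/ (e = ATau /\ m = m').

Definition st_label (m : st_marking S T) : seq (option Act) := map (lab N) m.2.

End ST.

Definition st_bar (S : Type) (T : eqType) (m : st_marking S T) : (S -> nat) * (T -> nat) :=
  (m.1, fun t => count_mem t m.2).

(* A plain net has no tau transitions, and its labelling is injective, so the
   transition at a position of the ST-marking's sequence is determined by its
   label.  Hence N2 can answer a^{-n} by terminating the instance at the same
   position n as N1, which keeps the label words equal; and any two a^- steps
   of a plain net from the same ST-marking terminate the same transition,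
   possibly at different positions, so they agree up to overline. *)
From mathcomp Require Import all_boot.
From Stdlib Require Import FunctionalExtensionality.

Set Implicit Arguments.
Unset Strict Implicit.
Unset Printing Implicit Defensive.

Lemma onth_take_drop (A : Type) (s : seq A) i x :
  onth s i = Some x -> s = take i s ++ x :: drop i.+1 s.
Proof.
elim: s i => [|y s IH] [|i] //=; first by case=> ->; rewrite drop0.
by move=> /IH {1}->.
Qed.

Lemma count_remove_nth (T : eqType) (p : pred T) (U : seq T) n t :
  0 < n -> onth U n.-1 = Some t ->
  count p U = count p (remove_nth U n) + p t.
Proof.
move=> n_gt0 Ut; rewrite {1}(onth_take_drop Ut).
by rewrite /remove_nth !count_cat /= prednK // addnAC addnA.
Qed.

Lemma count_remove_nth_same (T : eqType) (p : pred T) (U : seq T) n k t :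
  0 < n -> onth U n.-1 = Some t -> 0 < k -> onth U k.-1 = Some t ->
  count p (remove_nth U n) = count p (remove_nth U k).
Proof.
move=> n_gt0 Un k_gt0 Uk; apply/eqP.
by rewrite -(eqn_add2r (p t)) -!count_remove_nth.
Qed.

Section STSteps.
Variables (Act S : Type) (T : eqType) (N : petri_net Act S T).

Lemma st_step_opt_st_step m e m' :
  e <> ATau -> st_step_opt N m e m' -> st_step N m e m'.
Proof. by move=> e_tau [//|[/e_tau]]. Qed.

Lemma plain_st_step_opt_tau m m' :
  plain N -> st_step_opt N m ATau m' -> m' = m.
Proof. by move=> [_ no_tau] [[t [/no_tau]]|[_ ->]]. Qed.

Lemma st_label_plus m a m' :
  st_step N m (APlus a) m' -> st_label N m' = rcons (st_label N m) (Some a).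
Proof. by move=> [t [lt [_ ->]]]; rewrite /st_label map_rcons lt. Qed.

Lemma st_label_tau m m' : st_step N m ATau m' -> st_label N m' = st_label N m.
Proof. by move=> [t [_ [_ ->]]]. Qed.

Lemma st_label_minus m a n m' :
  st_step N m (AMinus a n) m' ->
  st_label N m' = take n.-1 (st_label N m) ++ drop n (st_label N m).
Proof.
by move=> [_ [t [_ [_ ->]]]]; rewrite /st_label /remove_nth map_cat map_take map_drop.
Qed.

Lemma st_label_minus_onth m a n m' :
  st_step N m (AMinus a n) m' -> onth (st_label N m) n.-1 = Some (Some a).
Proof. by move=> [_ [t [Ut [lt _]]]]; rewrite onth_map Ut /= lt. Qed.

Lemma st_step_minus_of_label m a n :
  0 < n -> onth (st_label N m) n.-1 = Some (Some a) ->
  exists m', st_step N m (AMinus a n) m'.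
Proof.
move=> n_gt0; rewrite onth_map.
case Un: (onth m.2 n.-1) => [t|] // [lt].
by exists ((fun s => m.1 s + F_ts N t s), remove_nth m.2 n); split=> //; exists t.
Qed.

Lemma plain_st_step_minus_bar m a n k m' m'' :
  plain N -> st_step N m (AMinus a n) m' -> st_step N m (AMinus a k) m'' ->
  st_bar m' = st_bar m''.
Proof.
move=> [lab_inj _] [n_gt0 [t [Un [lt ->]]]] [k_gt0 [t' [Uk [lt' ->]]]].
have eq_t't : t' = t by apply: lab_inj; rewrite lt lt'.
subst t'.
congr pair; apply: functional_extensionality => x /=.
exact: count_remove_nth_same n_gt0 Un k_gt0 Uk.
Qed.

End STSteps.

Theorem lemma3p11 (Act : Type) (S1 : Type) (T1 : eqType) (S2 : Type) (T2 : eqType)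
  (N1 : petri_net Act S1 T1) (N2 : petri_net Act S2 T2)
  (m1 m1' : st_marking S1 T1) (m2 m2' : st_marking S2 T2)
  (eta eta' : pmact Act) :
  plain N2 ->
  st_label N2 m2 = st_label N1 m1 ->
  st_step N1 m1 eta m1' ->
  st_step_opt N2 m2 eta' m2' ->
  bar_act eta' = bar_act eta ->
  exists m2'' : st_marking S2 T2,
    st_step_opt N2 m2 eta m2'' /\
    st_label N2 m2'' = st_label N1 m1' /\
    st_bar m2'' = st_bar m2'.
Proof.
move=> plainN2 lab_eq step1 step2 bar_eq.
case: eta step1 bar_eq => [a|a n|] step1.
- case: eta' step2 => // b step2 [eq_ba]; subst b.
  exists m2'; split=> //; split=> //.
  by rewrite (st_label_plus step1) -lab_eq (st_label_plus (st_step_opt_st_step _ step2)).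
- case: eta' step2 => // b k step2 [eq_ba]; subst b.
  have n_gt0 : 0 < n by case: step1.
  have [m2'' step2''] : exists m', st_step N2 m2 (AMinus a n) m'.
    by apply: st_step_minus_of_label; rewrite // lab_eq (st_label_minus_onth step1).
  exists m2''; split; first by left.
  split; first by rewrite (st_label_minus step2'') (st_label_minus step1) lab_eq.
  exact: plain_st_step_minus_bar step2'' (st_step_opt_st_step _ step2).
- case: eta' step2 => // step2 _.
  exists m2; split; first by right.
  by rewrite (plain_st_step_opt_tau plainN2 step2) (st_label_tau step1).
Qed.
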